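(* Let $E,F,W$ be finite-dimensional real inner product spaces, $\ell,\ell'\in\mathbf N$, let $L_0\in\mathrm{End}(E;F)\otimes T_\ell(\mathfrak g_1)$ be such that $\mathrm{Sym}(L_0)(D)$ is cocanceling, and let $M\in\mathrm{End}(F;W)\otimes T_{\ell'}(\mathfrak g_1)$. If there exists $\xi_0\in\mathbf R^m$ such that $\mathrm{Sym}(M)(\xi_0)$ is injective, then $\mathrm{Sym}(M\circ L_0)(D)$ is cocanceling.
   Context: $\mathfrak g_1$ is an $m$-dimensional real vector space (the first layer of the Lie algebra of a stratified homogeneous group) with basis $X_1,\dots,X_m$. $\mathcal I_j=\{1,\dots,m\}^j$; $T_j(\mathfrak g_1)$ is the $j$-fold tensor power with basis $X^\otimes_\lambda=X_{\lambda_1}\otimes\cdots\otimes X_{\lambda_j}$. For $L=\sum_{\lambda\in\mathcal I_j}B^\lambda X^\otimes_\lambda\in\mathrm{End}(E;F)\otimes T_j(\mathfrak g_1)$, $\mathrm{Sym}(L)(\xi)=\sum_\lambda\xi_{\lambda_1}\cdots\xi_{\lambda_j}B^\lambda\in\mathrm{End}(E;F)$ for $\xi\in\mathbf R^m$, and $\mathrm{Sym}(L)(D)$ is called cocanceling if $\bigcap_{\xi\in\mathbf R^m}\ker\mathrm{Sym}(L)(\xi)=\{0\}$. For $M=\sum_{\gamma'\in\mathcal I_{\ell'}}M^{\gamma'}X^\otimes_{\gamma'}$ and $L_0=\sum_{\gamma\in\mathcal I_\ell}L_0^{\gamma}X^\otimes_\gamma$, $M\circ L_0=\sum_{\gamma',\gamma}(M^{\gamma'}\circ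 L_0^\gamma)X^\otimes_{\gamma'}\otimes X^\otimes_\gamma\in\mathrm{End}(E;W)\otimes T_{\ell+\ell'}(\mathfrak g_1)$. *)

(* E = R^e, F = R^f, W = R^w (row vectors); an element of
   End(E;F) is a matrix 'M[R]_(e,f) acting on the right: v |-> v *m A.
   T_j(g_1) is represented by its coordinates in the basis X^⊗_λ,
   λ ∈ I_j = {1..m}^j, i.e. j.-tuple 'I_m. *)
From HB Require Import structures.
From mathcomp Require Import all_boot all_order all_algebra.
From mathcomp Require Import reals.
Set Implicit Arguments. Unset Strict Implicit. Unset Printing Implicit Defensive.
Import Order.TTheory GRing.Theory Num.Theory.
Local Open Scope ring_scope.

Definition tensorOp (R : Type) (m j a b : nat) := j.-tuple 'I_m -> 'M[R]_(a, b).

Definition Sym (R : realType) (m j a b : nat) (L : tensorOp R m j a b)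
  (xi : 'rV[R]_m) : 'M[R]_(a, b) :=
  \sum_(lam : j.-tuple 'I_m) (\prod_(i < j) xi 0 (tnth lam i)) *: L lam.

Definition cocanceling (R : realType) (m j a b : nat) (L : tensorOp R m j a b) :=
  forall v : 'rV[R]_a, (forall xi : 'rV[R]_m, v *m Sym L xi = 0) -> v = 0.

(* M ∘ L0 = Σ_{γ',γ} (M^{γ'} ∘ L0^γ) X_{γ'} ⊗ X_γ ; with the row-vector
   convention, M^{γ'} ∘ L0^γ is the matrix L0^γ *m M^{γ'}. *)
Definition tcomp (R : realType) (m l l' e f w : nat)
  (M : tensorOp R m l' f w) (L0 : tensorOp R m l e f) : tensorOp R m (l' + l) e w :=
  fun lam => \sum_(g' : l'.-tuple 'I_m) \sum_(g : l.-tuple 'I_m)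
     (if val lam == cat (val g') (val g) then L0 g *m M g' else 0).

(** Fix [v] with [v Sym(L0)(ξ) Sym(M)(ξ) = 0] for every [ξ], and a direction
    [ξ].  On the line [t ↦ ξ0 + t(ξ - ξ0)] both [v Sym(L0)] and
    [det (Sym(M) B)], for a right inverse [B] of [Sym(M)(ξ0)], are polynomial
    in [t]; the determinant is [1] at [t = 0], so it vanishes at finitely many
    [t] only, and wherever it does not vanish [Sym(M)] is injective, which
    forces [v Sym(L0) = 0].  A polynomial vanishing off the roots of a nonzero
    polynomial is zero, so [v Sym(L0)] vanishes on the whole line, in
    particular at [t = 1], i.e. at [ξ]. *)

From HB Require Import structures.
From mathcomp Require Import all_boot all_order all_algebra.
From mathcomp Require Import reals.
Set Implicit Arguments. Unset Strict Implicit. Unset Printing Implicit Defensive.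
Import Order.TTheory GRing.Theory Num.Theory.
Local Open Scope ring_scope.

Lemma poly_eq0_horner (R : numDomainType) (p : {poly R}) :
  (forall t, p.[t] = 0) -> p = 0.
Proof.
move=> p0; apply: (@roots_geq_poly_eq0 _ p [seq i%:R | i <- iota 0 (size p)]).
- by apply/allP => _ /mapP [i _ ->]; apply/rootP.
- by rewrite map_inj_uniq ?iota_uniq // => i k /eqP; rewrite eqr_nat => /eqP.
- by rewrite size_map size_iota.
Qed.

Lemma poly_eq0_off_roots (R : numDomainType) (p q : {poly R}) :
  q != 0 -> (forall t, q.[t] != 0 -> p.[t] = 0) -> p = 0.
Proof.
move=> q_neq0 pq0; suff /eqP : q * p = 0 by rewrite mulf_eq0 (negbTE q_neq0) => /eqP.
apply: poly_eq0_horner => t; rewrite hornerM.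
by have [-> | /pq0 ->] := eqVneq q.[t] 0; rewrite (mul0r, mulr0).
Qed.

Lemma row_free_injective (F : fieldType) (n p : nat) (A : 'M[F]_(n, p)) :
  injective (fun v : 'rV[F]_n => v *m A) -> row_free A.
Proof.
move=> injA; rewrite -kermx_eq0; apply/eqP/row_matrixP => i.
by rewrite row0; apply: injA; rewrite /= mul0mx -row_mul mulmx_ker row0.
Qed.

Lemma horner_map_polyC (R : comNzRingType) (a b : nat) (t : R) (A : 'M[R]_(a, b)) :
  map_mx (horner_eval t) (map_mx polyC A) = A.
Proof. by rewrite -map_mx_comp; apply: map_mx_id => x /=; rewrite horner_evalE hornerC. Qed.

Section SymOnLines.
Variables (R : realType) (m : nat).

Definition Sym_line (j a b : nat) (L : tensorOp R m j a b) (x y : 'rV[R]_m) :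
    'M[{poly R}]_(a, b) :=
  \sum_(lam : j.-tuple 'I_m)
    (\prod_(i < j) ((x 0 (tnth lam i))%:P + (y 0 (tnth lam i))%:P * 'X))
      *: map_mx polyC (L lam).

Lemma horner_Sym_line (j a b : nat) (L : tensorOp R m j a b) x y t :
  map_mx (horner_eval t) (Sym_line L x y) = Sym L (x + t *: y).
Proof.
rewrite /Sym_line /Sym map_mx_sum; apply: eq_bigr => lam _.
rewrite map_mxZ horner_map_polyC rmorph_prod; congr (_ *: _).
apply: eq_bigr => i _; rewrite /= horner_evalE hornerD hornerMX !hornerC !mxE.
by rewrite mulrC.
Qed.

Lemma Sym_tcomp (l l' e f w : nat) (L0 : tensorOp R m l e f)
    (M : tensorOp R m l' f w) xi :
  Sym (tcomp M L0) xi = Sym L0 xi *m Sym M xi.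
Proof.
pose mono k (g : k.-tuple 'I_m) := \prod_(i < k) xi 0 (tnth g i).
have mono_cat (g' : l'.-tuple 'I_m) (g : l.-tuple 'I_m) :
    mono _ [tuple of g' ++ g] = mono _ g' * mono _ g.
  rewrite /mono big_split_ord /=.
  by congr (_ * _); apply: eq_bigr => i _; rewrite (tnth_lshift, tnth_rshift).
have -> : Sym L0 xi *m Sym M xi = \sum_(g' : l'.-tuple 'I_m) \sum_(g : l.-tuple 'I_m)
    (mono _ g' * mono _ g) *: (L0 g *m M g').
  rewrite /Sym mulmx_suml exchange_big; apply: eq_bigr => g' _.
  rewrite mulmx_sumr; apply: eq_bigr => g _.
  by rewrite -scalemxAr -scalemxAl scalerA mulrC.
rewrite /Sym /tcomp.
under eq_bigr do rewrite scaler_sumr; rewrite exchange_big; apply: eq_bigr => g' _.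
under eq_bigr do rewrite scaler_sumr; rewrite exchange_big; apply: eq_bigr => g _.
under eq_bigr do rewrite [_ *: (if _ then _ else _)]fun_if scaler0.
by rewrite -big_mkcond (big_pred1 [tuple of g' ++ g]) -?mono_cat.
Qed.

Lemma Sym_mulmx_eq0 (j k a b c : nat) (A : tensorOp R m j a b)
    (C : tensorOp R m k b c) (v : 'rV[R]_a) (x0 : 'rV[R]_m) :
  row_free (Sym C x0) ->
  (forall x, v *m Sym A x *m Sym C x = 0) -> forall x, v *m Sym A x = 0.
Proof.
move=> /row_freeP [B CB1] vAC0 x; pose y := x - x0.
pose q := \det (Sym_line C x0 y *m map_mx polyC B).
pose P := map_mx polyC v *m Sym_line A x0 y.
have hornerq t : q.[t] = \det (Sym C (x0 + t *: y) *m B).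
  by rewrite -horner_evalE -det_map_mx map_mxM horner_Sym_line horner_map_polyC.
have hornerP t : map_mx (horner_eval t) P = v *m Sym A (x0 + t *: y).
  by rewrite map_mxM horner_Sym_line horner_map_polyC.
have q_neq0 : q != 0.
  apply/eqP => /(congr1 (horner^~ 0)); rewrite /= hornerq scale0r addr0 CB1 det1 horner0.
  exact/eqP/oner_neq0.
have P0 : P = 0.
  apply/rowP => i; rewrite [RHS]mxE; apply: (poly_eq0_off_roots q_neq0) => t qt_neq0.
  have unitCB : Sym C (x0 + t *: y) *m B \in unitmx by rewrite unitmxE unitfE -hornerq.
  have vA0 : v *m Sym A (x0 + t *: y) = 0.
    by rewrite -[LHS](mulmxK unitCB) mulmxA vAC0 !mul0mx.
  by have /rowP/(_ i) := hornerP t; rewrite vA0 [RHS]mxE [LHS]mxE horner_evalE.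
by have := hornerP 1; rewrite P0 map_mx0 scale1r addrC subrK.
Qed.

End SymOnLines.

Theorem proposition6p1 (R : realType) (m e f w l l' : nat)
  (L0 : tensorOp R m l e f) (M : tensorOp R m l' f w) :
  cocanceling L0 ->
  (exists xi0 : 'rV[R]_m, injective (fun v : 'rV[R]_f => v *m Sym M xi0)) ->
  cocanceling (tcomp M L0).
Proof.
move=> L0_cocanc [xi0 /row_free_injective M_free] v vLM0.
apply: L0_cocanc; apply: (Sym_mulmx_eq0 M_free) => xi.
by rewrite -mulmxA -Sym_tcomp.
Qed.
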